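(* Let $f:\mathbb{R}_+\to\mathbb{R}$ be completely monotone to order four. Then for every nonnegative real random variable $W$, \[ \operatorname{Cov}(W,f'(W))=\mathbb{E}\big[(W-\mathbb{E}W)f'(W)\big]\le\mathbb{E}[W^2]\cdot\mathbb{E}[f''(W)], \] whenever the expectations are finite.
   Context: A function $f:I\to\mathbb{R}$ on an interval $I\subseteq\mathbb{R}$ is completely monotone to order $K$ if its first $K$ derivatives exist and $(-1)^kf^{(k)}(w)\ge0$ for all $w\in I$ and each $k=0,1,\dots,K$; at an endpoint of $I$ contained in $I$, derivatives are one-sided. Here $\mathbb{R}_+=[0,\infty)$. *)

From HB Require Import structures.
From mathcomp Require Import all_boot all_order all_algebra.
From mathcomp Require Import all_classical all_reals all_analysis.
Set Implicit Arguments. Unset Strict Implicit. Unset Printing Implicit Defensive.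
Import Order.TTheory GRing.Theory Num.Theory.
Import numFieldNormedType.Exports.
Local Open Scope classical_set_scope.
Local Open Scope ring_scope.

(* [deriv_on_Rplus g g'] : on R_+ = [0, +oo), the function g is differentiable
   with derivative g', derivatives at the endpoint 0 being one-sided (right):
   for every w >= 0, (g (w + h) - g w) / h --> g' w as h --> 0 with h <> 0
   and w + h in R_+. *)
Definition deriv_on_Rplus (R : realType) (g g' : R -> R) : Prop :=
  forall w : R, 0 <= w ->
    (fun h : R => h^-1 * (g (w + h) - g w))
      @ within [set h : R | h != 0 /\ 0 <= w + h] (nbhs (0 : R)) --> g' w.

Definition completely_monotone4 (R : realType) (f f1 f2 f3 f4 : R -> R) : Prop :=
  [/\ deriv_on_Rplus f f1, deriv_on_Rplus f1 f2, deriv_on_Rplus f2 f3,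
      deriv_on_Rplus f3 f4 &
      forall w : R, 0 <= w ->
        [/\ 0 <= f w, f1 w <= 0, 0 <= f2 w, f3 w <= 0 & 0 <= f4 w]].

(* Write m = E W.  For 0 <= m, w, concavity of f1 (f3 <= 0) and convexity of
   f2 (f4 >= 0) give the pointwise bound
     (w - m) f1(w) <= f2(m) (w - m)^2 + m^2 f2(w) + f1(m) (w - m)
   (tangent to f1 at m when m <= w; tangent at w together with
   (m - w)^2 <= m^2 when w < m).  Its expectation is
   f2(m) Var W + m^2 E f2(W), and Jensen's inequality f2(m) <= E f2(W) for the
   convex f2, with Var W = E W^2 - m^2 >= 0, bounds this by E W^2 E f2(W). *)

From HB Require Import structures.
From mathcomp Require Import all_boot all_order all_algebra.
From mathcomp Require Import all_classical all_reals all_analysis.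
From mathcomp Require Import ring lra.
Import Order.TTheory GRing.Theory Num.Theory.
Import numFieldNormedType.Exports.
Local Open Scope classical_set_scope.
Local Open Scope ring_scope.

Section deriv_on_Rplus.
Context {R : realType}.

Lemma deriv_on_RplusN {g g' : R -> R} : deriv_on_Rplus g g' ->
  deriv_on_Rplus (fun x => - g x) (fun x => - g' x).
Proof.
move=> dg w w0; under eq_fun do rewrite -opprD mulrN.
exact: cvgN (dg w w0).
Qed.

Lemma deriv_on_Rplus_dist_lt {g g' : R -> R} {w e : R} :
  deriv_on_Rplus g g' -> 0 <= w -> 0 < e -> exists2 r, 0 < r &
    forall h, h != 0 -> 0 <= w + h -> `|h| < r ->
      `|h^-1 * (g (w + h) - g w) - g' w| < e.
Proof.
move=> dg w0 e0; move/cvgrPdist_lt/(_ _ e0): (dg w w0).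
rewrite near_withinE => -[r /= r0 near_r]; exists r => // h h0 wh hr.
by rewrite distrC; apply: near_r; rewrite //= sub0r normrN.
Qed.

Lemma deriv_on_Rplus_continuous {g g' : R -> R} {x : R} :
  deriv_on_Rplus g g' -> 0 <= x ->
  g @ within [set y | 0 <= y] (nbhs x) --> g x.
Proof.
move=> dg x0; apply/cvgrPdist_lt => e e0; rewrite near_withinE.
have [r r0 near_r] := deriv_on_Rplus_dist_lt dg x0 ltr01.
pose M := `|g' x| + 1.
have M0 : 0 < M by rewrite ltr_wpDl.
exists (Num.min r (e / M)); first by rewrite /= lt_min r0 divr_gt0.
move=> y /=; rewrite distrC lt_min => /andP[yr yeM] y0.
have [->|yx] := eqVneq y x; first by rewrite subrr normr0.
have yx0 : y - x != 0 by rewrite subr_eq0.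
have := near_r (y - x) yx0; rewrite addrC subrK => /(_ y0 yr) slope_near.
have slope_le : `|(y - x)^-1 * (g y - g x)| <= M.
  have := ler_normD ((y - x)^-1 * (g y - g x) - g' x) (g' x).
  by rewrite subrK => /le_trans; apply; rewrite addrC lerD2l ltW.
have -> : g x - g y = - ((y - x) * ((y - x)^-1 * (g y - g x))).
  by rewrite mulrA mulfV // mul1r opprB.
rewrite normrN normrM; apply: le_lt_trans (_ : `|y - x| * M < e).
  exact: ler_wpM2l.
by rewrite -ltr_pdivlMr.
Qed.

Lemma deriv_on_Rplus_is_derive {g g' : R -> R} {x : R} :
  deriv_on_Rplus g g' -> 0 < x ->
  is_derive x 1 g (g' x).
Proof.
move=> dg x0.
have slope_cvg :
    (fun h => h^-1 *: ((g \o shift x) (h *: 1) - g x)) @ 0^' --> g' x.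
  apply/cvgrPdist_lt => e e0; rewrite /dnbhs near_withinE.
  have [r r0 near_r] := deriv_on_Rplus_dist_lt dg (ltW x0) e0.
  exists (Num.min r x); first by rewrite /= lt_min r0 x0.
  move=> h /=; rewrite sub0r normrN lt_min => /andP[hr hx] h0.
  rewrite distrC /shift /= [h%:A]mulr1 (addrC h x); apply: near_r => //.
  by rewrite -[h]opprK subr_ge0 (le_trans (ler_norm _)) // normrN ltW.
apply: DeriveDef; first exact: cvgP slope_cvg.
exact: cvg_lim slope_cvg.
Qed.

Lemma deriv_on_Rplus_MVT {g g' : R -> R} {a b : R} :
  deriv_on_Rplus g g' -> 0 <= a -> a < b ->
  exists2 c, a < c < b & g b - g a = g' c * (b - a).
Proof.
move=> dg a0 ab.
have g_cont : {within `[a, b], continuous g}.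
  apply: (@continuous_subspaceW _ _ _ [set y : R | 0 <= y]).
    by move=> y; rewrite /= in_itv /= => /andP[ay _]; exact: le_trans ay.
  by apply/subspace_continuousP => y y0; exact: deriv_on_Rplus_continuous dg y0.
have g_derive x : x \in `]a, b[ -> is_derive x 1 g (g' x).
  rewrite in_itv /= => /andP[ax _].
  exact: deriv_on_Rplus_is_derive dg (le_lt_trans a0 ax).
by have [c] := MVT ab g_derive g_cont; rewrite in_itv; exists c.
Qed.

Lemma deriv_on_Rplus_ge0_ndecr {g g' : R -> R} {a b : R} :
  deriv_on_Rplus g g' -> (forall x, 0 <= x -> 0 <= g' x) ->
  0 <= a -> a <= b -> g a <= g b.
Proof.
move=> dg g'_ge0 a0; rewrite le_eqVlt => /predU1P[->//|ab].
have [c /andP[ac _] gba] := deriv_on_Rplus_MVT dg a0 ab.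
rewrite -subr_ge0 gba mulr_ge0 ?subr_ge0 ?(ltW ab) // g'_ge0 //.
exact: le_trans a0 (ltW ac).
Qed.

Lemma deriv_on_Rplus_le0_nincr {g g' : R -> R} {a b : R} :
  deriv_on_Rplus g g' -> (forall x, 0 <= x -> g' x <= 0) ->
  0 <= a -> a <= b -> g b <= g a.
Proof.
move=> /deriv_on_RplusN dg g'_le0 a0 ab; rewrite -lerN2.
by apply: (deriv_on_Rplus_ge0_ndecr dg) => // x x0; rewrite oppr_ge0 g'_le0.
Qed.

Lemma deriv_on_Rplus_tangent_le {g g' : R -> R} {x y : R} :
  deriv_on_Rplus g g' -> (forall a b, 0 <= a -> a <= b -> g' a <= g' b) ->
  0 <= x -> 0 <= y -> g x + g' x * (y - x) <= g y.
Proof.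
move=> dg g'_mono x0 y0; have [xy|yx|<-] := ltgtP x y.
- have [c /andP[xc _] gyx] := deriv_on_Rplus_MVT dg x0 xy.
  have : g' x <= g' c by apply: g'_mono => //; exact: ltW.
  have : 0 < y - x by rewrite subr_gt0.
  nra.
- have [c /andP[yc cx] gxy] := deriv_on_Rplus_MVT dg y0 yx.
  have : g' c <= g' x by apply: g'_mono; rewrite ?(le_trans y0 (ltW yc)) ?ltW.
  have : 0 < x - y by rewrite subr_gt0.
  nra.
- by rewrite subrr mulr0 addr0.
Qed.

Lemma deriv_on_Rplus_tangent_ge {g g' : R -> R} {x y : R} :
  deriv_on_Rplus g g' -> (forall a b, 0 <= a -> a <= b -> g' b <= g' a) ->
  0 <= x -> 0 <= y -> g y <= g x + g' x * (y - x).
Proof.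
move=> /deriv_on_RplusN dg g'_anti x0 y0; rewrite -lerN2 opprD -mulNr.
apply: deriv_on_Rplus_tangent_le dg _ x0 y0 => a b a0 ab.
by rewrite lerN2 g'_anti.
Qed.

End deriv_on_Rplus.

Section completely_monotone4.
Context {R : realType} {f f1 f2 f3 f4 : R -> R}.
Hypothesis cm : completely_monotone4 f f1 f2 f3 f4.

Lemma cm4_f2_ge0 {w : R} : 0 <= w -> 0 <= f2 w.
Proof. by case: cm => _ _ _ _ /(_ w) sgn /sgn[]. Qed.

Lemma cm4_f2_tangent_le {m w : R} : 0 <= m -> 0 <= w ->
  f2 m + f3 m * (w - m) <= f2 w.
Proof.
case: cm => _ _ d3 d4 sgn; apply: deriv_on_Rplus_tangent_le d3 _ => a b a0 ab.
by apply: deriv_on_Rplus_ge0_ndecr d4 _ a0 ab => x /sgn[].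
Qed.

Lemma cm4_f1_tangent_ge {x y : R} : 0 <= x -> 0 <= y ->
  f1 y <= f1 x + f2 x * (y - x).
Proof.
case: cm => _ d2 d3 _ sgn; apply: deriv_on_Rplus_tangent_ge d2 _ => a b a0 ab.
by apply: deriv_on_Rplus_le0_nincr d3 _ a0 ab => z /sgn[].
Qed.

Lemma cm4_centered_f1_le {m w : R} : 0 <= m -> 0 <= w ->
  (w - m) * f1 w <= f2 m * (w - m) ^+ 2 + m ^+ 2 * f2 w + f1 m * (w - m).
Proof.
move=> m0 w0; have f2w := cm4_f2_ge0 w0; have f2m := cm4_f2_ge0 m0.
have [mw|wm] := leP m w.
- have wm0 : 0 <= w - m by rewrite subr_ge0.
  have := ler_wpM2l wm0 (cm4_f1_tangent_ge m0 w0).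
  have : 0 <= m ^+ 2 * f2 w by rewrite mulr_ge0 ?sqr_ge0.
  nra.
- have mw0 : 0 <= m - w by rewrite subr_ge0 ltW.
  have := ler_wpM2l mw0 (cm4_f1_tangent_ge w0 m0).
  have : (m - w) ^+ 2 <= m ^+ 2 by nra.
  have : 0 <= f2 m * (w - m) ^+ 2 by rewrite mulr_ge0 ?sqr_ge0.
  nra.
Qed.

End completely_monotone4.

Section probability_Rintegral.
Context {d} {T : measurableType d} {R : realType} {P : probability T R}.
Local Notation integrable u := (P.-integrable setT (EFin \o u)).

Lemma integrableD_EFin {u v : T -> R} : integrable u -> integrable v ->
  integrable (fun t => u t + v t).
Proof.
move=> iu iv; rewrite (_ : _ \o _ = (EFin \o u) \+ (EFin \o v))%E //.
exact: integrableD.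
Qed.

Lemma integrableZl_EFin (a : R) {u : T -> R} : integrable u ->
  integrable (fun t => a * u t).
Proof.
move=> iu; rewrite (_ : _ \o _ = (fun t => a%:E * (EFin \o u) t))%E.
  exact: integrableZl.
by apply/funext => t /=; rewrite EFinM.
Qed.

Lemma integrable_cst_EFin (c : R) : integrable (fun _ => c).
Proof. exact: finite_measure_integrable_cst. Qed.

Lemma integral_EFin {u : T -> R} : integrable u ->
  (\int[P]_t (u t)%:E = (\int[P]_t u t)%:E)%E.
Proof. by move=> iu; rewrite fineK // integrable_fin_num. Qed.

Lemma expectation_Rintegral {u : T -> R} : integrable u ->
  ('E_P[u] = (\int[P]_t u t)%:E)%E.
Proof. by move=> iu; rewrite unlock integral_EFin. Qed.

Lemma Rintegral_cst_probability (c : R) : \int[P]_t c = c.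
Proof.
by rewrite /Rintegral integral_cst // [X in (_ * X)%E]probability_setT mule1.
Qed.

End probability_Rintegral.

Section centered_moments.
Context {d} {T : measurableType d} {R : realType} {P : probability T R}.
Local Notation integrable u := (P.-integrable setT (EFin \o u)).
Context {W : T -> R}.
Hypotheses (intW : integrable W) (intW2 : integrable (fun t => W t ^+ 2)).
Local Notation m := (\int[P]_t W t).

Lemma integrable_centered : integrable (fun t => W t - m).
Proof. exact: integrableD_EFin intW (integrable_cst_EFin _). Qed.

Lemma Rintegral_centered : \int[P]_t (W t - m) = 0.
Proof.
by rewrite RintegralB // ?integrable_cst_EFin // Rintegral_cst_probability subrr.
Qed.

Let centered_sqrE t : (W t - m) ^+ 2 = W t ^+ 2 + (-2 * m * W t + m ^+ 2).
Proof. by ring. Qed.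

Lemma integrable_centered_sqr : integrable (fun t => (W t - m) ^+ 2).
Proof.
under eq_fun do rewrite centered_sqrE.
exact: integrableD_EFin intW2
  (integrableD_EFin (integrableZl_EFin _ intW) (integrable_cst_EFin _)).
Qed.

Lemma Rintegral_centered_sqr :
  \int[P]_t ((W t - m) ^+ 2) = \int[P]_t (W t ^+ 2) - m ^+ 2.
Proof.
under eq_Rintegral do rewrite centered_sqrE.
rewrite !RintegralD ?integrableD_EFin ?integrableZl_EFin ?integrable_cst_EFin //.
rewrite RintegralZl // !Rintegral_cst_probability; ring.
Qed.

End centered_moments.

Section covariance_bound.
Context {d} {T : measurableType d} {R : realType} {P : probability T R}.
Local Notation integrable u := (P.-integrable setT (EFin \o u)).
Context {f f1 f2 f3 f4 : R -> R} {W : T -> R}.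
Hypotheses (cm : completely_monotone4 f f1 f2 f3 f4) (W_ge0 : forall t, 0 <= W t).
Hypotheses (intW : integrable W) (intW2 : integrable (fun t => W t ^+ 2)).
Hypotheses (intf1 : integrable (fun t => f1 (W t)))
  (intWf1 : integrable (fun t => W t * f1 (W t)))
  (intf2 : integrable (fun t => f2 (W t))).
Local Notation m := (\int[P]_t W t).

Lemma mean_ge0 : 0 <= m.
Proof. exact: Rintegral_ge0. Qed.

Lemma f2_mean_le_Rintegral : f2 m <= \int[P]_t f2 (W t).
Proof.
have int_lin := integrable_centered intW.
have intJ := integrableD_EFin (integrable_cst_EFin (f2 m))
  (integrableZl_EFin (f3 m) int_lin).
apply: le_trans (le_Rintegral measurableT intJ intf2 _).
  rewrite RintegralD ?integrable_cst_EFin ?integrableZl_EFin // RintegralZl //.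
  by rewrite Rintegral_centered // mulr0 addr0 Rintegral_cst_probability.
by move=> t _; exact (cm4_f2_tangent_le cm mean_ge0 (W_ge0 t)).
Qed.

Lemma integrable_centered_f1 : integrable (fun t => (W t - m) * f1 (W t)).
Proof.
under eq_fun do rewrite mulrBl -mulNr.
exact (integrableD_EFin intWf1 (integrableZl_EFin _ intf1)).
Qed.

Lemma Rintegral_centered_f1_le :
  \int[P]_t ((W t - m) * f1 (W t)) <=
  f2 m * (\int[P]_t (W t ^+ 2) - m ^+ 2) + m ^+ 2 * \int[P]_t f2 (W t).
Proof.
have int_sqr := integrable_centered_sqr intW intW2.
have int_lin := integrable_centered intW.
have int_sqr_f2 := integrableD_EFin (integrableZl_EFin (f2 m) int_sqr)
  (integrableZl_EFin (m ^+ 2) intf2).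
have intB := integrableD_EFin int_sqr_f2 (integrableZl_EFin (f1 m) int_lin).
apply: le_trans (le_Rintegral measurableT integrable_centered_f1 intB _) _.
  by move=> t _; exact (cm4_centered_f1_le cm mean_ge0 (W_ge0 t)).
rewrite !RintegralD ?integrableZl_EFin // !RintegralZl //.
by rewrite Rintegral_centered_sqr // Rintegral_centered // mulr0 addr0.
Qed.

End covariance_bound.

Theorem lemma7p3 (R : realType) (f f1 f2 f3 f4 : R -> R)
  (d : measure_display) (T : measurableType d) (P : probability T R)
  (W : T -> R) :
  completely_monotone4 f f1 f2 f3 f4 ->
  (forall t, 0 <= W t) ->
  P.-integrable setT (EFin \o W) ->
  P.-integrable setT (EFin \o (fun t => f1 (W t))) ->
  P.-integrable setT (EFin \o (fun t => W t * f1 (W t))) ->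
  P.-integrable setT (EFin \o (fun t => W t ^+ 2)) ->
  P.-integrable setT (EFin \o (fun t => f2 (W t))) ->
  (\int[P]_t (((W t)%:E - 'E_P[W]) * (f1 (W t))%:E)
     <= 'E_P[fun t => (W t ^+ 2)%R] * 'E_P[fun t => f2 (W t)])%E.
Proof.
move=> cm W_ge0 intW intf1 intWf1 intW2 intf2.
rewrite !expectation_Rintegral //.
under eq_integral do rewrite -EFinB -EFinM.
rewrite integral_EFin ?integrable_centered_f1 // -EFinM lee_fin.
apply: le_trans (Rintegral_centered_f1_le cm W_ge0 intW intW2 intf1 intWf1 intf2) _.
have variance_ge0 : 0 <= \int[P]_t (W t ^+ 2) - (\int[P]_t W t) ^+ 2.
  by rewrite -Rintegral_centered_sqr // Rintegral_ge0 // => t _; exact: sqr_ge0.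
have := f2_mean_le_Rintegral cm W_ge0 intW intf2.
nra.
Qed.
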